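(* Let $Y_1,Y_2\subsetneq\mathbb{C}$ be conformally equivalent domains and $\Omega\subset\mathbb{C}$ an arbitrary domain. Then there exist $a\in Y_1$ and $b\in Y_2$ such that $\mathscr{C}_{\Omega}^{Y_1,a}(w)=\mathscr{C}_{\Omega}^{Y_2,b}(w)$ for every $w\in\Omega$.
   Context: $\mathbb{D}=\{z\in\mathbb{C}:|z|<1\}$. For domains $\Omega\subset\mathbb{C}$, $Y\subsetneq\mathbb{C}$, and points $w\in\Omega$, $s\in Y$, let $\mathcal{H}^s_w(\Omega,Y)$ be the set of holomorphic maps $h:\Omega\to Y$ with $h(w)=s$ and $h(z)\neq s$ for all $z\in\Omega\setminus\{w\}$. For a domain $Y\subsetneq\mathbb{C}$ and $v\in Y$, the Hurwitz density is $\eta_Y(v)=2/r_Y(v)$, where $r_Y(v)=\max\{h'(0): h:\mathbb{D}\to Y \text{ holomorphic},\ h(0)=v,\ h(z)\neq v \text{ for } z\in\mathbb{D}\setminus\{0\},\ h'(0)>0\}$. The Carathéodory density of the Hurwitz metric of $\Omega$ relative to $Y$ is $\mathscr{C}_{\Omega}^{Y,s}(w)=\sup\{\eta_Y(h(w))|h'(w)| : h\in\mathcal{H}^s_w(\Omega,Y)\}$, defined to be $0$ if $\mathcal{H}^s_w(\Omega,Y)=\emptyset$. *)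

(* mathcomp-analysis, complex plane = R[i] (R : realType),
   viewed as a normed module over itself via the regular structure ^o. *)
From HB Require Import structures.
From mathcomp Require Import all_boot all_order all_algebra.
From mathcomp Require Import all_classical all_reals all_analysis.
From mathcomp Require Import complex.
Import Order.TTheory GRing.Theory Num.Theory.
Import numFieldNormedType.Exports.

Set Implicit Arguments.
Unset Strict Implicit.
Unset Printing Implicit Defensive.

Local Open Scope classical_set_scope.
Local Open Scope ring_scope.
Local Open Scope complex_scope.

Notation Cplx R := ((R[i])^o) (only parsing).

Definition domain (R : realType) (A : set (Cplx R)) : Prop :=
  open A /\ connected A /\ A !=set0.

Definition holo_on (R : realType) (f : Cplx R -> Cplx R) (A : set (Cplx R)) : Prop :=
  forall z, A z -> derivable f z 1.

Definition hol_map (R : realType) (Om Y : set (Cplx R)) (f : Cplx R -> Cplx R) : Prop :=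
  holo_on f Om /\ (forall z, Om z -> Y (f z)).

Definition Hclass (R : realType) (Om Y : set (Cplx R)) (w s : Cplx R)
    (h : Cplx R -> Cplx R) : Prop :=
  hol_map Om Y h /\ h w = s /\ (forall z, Om z -> z <> w -> h z <> s).

Definition unit_disc (R : realType) : set (Cplx R) := [set z | `|z| < 1].

(* r_Y(v) = max { h'(0) : h in H^v_0(D, Y), h'(0) > 0 }  (taken as a sup). *)
Definition hurwitz_r (R : realType) (Y : set (Cplx R)) (v : Cplx R) : R :=
  sup [set x : R | 0 < x /\
        exists h, Hclass (@unit_disc R) Y 0 v h /\ 'D_1 h 0 = (x%:C : Cplx R)].

Definition hurwitz_eta (R : realType) (Y : set (Cplx R)) (v : Cplx R) : R :=
  2 / hurwitz_r Y v.

Definition cara_density (R : realType) (Om Y : set (Cplx R)) (s w : Cplx R) : \bar R :=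
  if `[< exists h, Hclass Om Y w s h >] then
    ereal_sup [set ((hurwitz_eta Y (h w)) * Normc.normc ('D_1 h w))%:E
              | h in [set h | Hclass Om Y w s h]]
  else 0%E.

Definition conf_equiv (R : realType) (Y1 Y2 : set (Cplx R)) : Prop :=
  exists f g : Cplx R -> Cplx R,
    holo_on f Y1 /\ holo_on g Y2 /\
    (forall z, Y1 z -> Y2 (f z) /\ g (f z) = z) /\
    (forall z, Y2 z -> Y1 (g z) /\ f (g z) = z).

From HB Require Import structures.
From mathcomp Require Import all_boot all_order all_algebra.
From mathcomp Require Import all_classical all_reals all_analysis.
From mathcomp Require Import complex.
Import Order.TTheory GRing.Theory Num.Theory.
Import numFieldNormedType.Exports.

Set Implicit Arguments.
Unset Strict Implicit.
Unset Printing Implicit Defensive.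

Local Open Scope classical_set_scope.
Local Open Scope ring_scope.
Local Open Scope complex_scope.

(* Let f : Y1 -> Y2 be a biholomorphism with inverse g and take any a in Y1.
   Post-composition with f maps H^s_w(Om, Y1) onto H^(f s)_w(Om, Y2) and
   multiplies derivatives by f'(s).  For disc maps, a further pre-composition
   with the rotation z |-> (|f'(v)| / f'(v)) z makes the derivative at 0
   positive again, so r_Y2(f v) = |f'(v)| r_Y1(v), i.e.
   eta_Y2(f v) |f'(v)| = eta_Y1(v).  Hence the values whose supremum defines
   the Caratheodory density of Om relative to (Y1, a) are exactly those
   defining it relative to (Y2, f a). *)

Section ChainRule.
Variable K : numFieldType.
Implicit Types f g : K^o -> K^o.

Lemma derivable1_comp f g x : derivable f x 1 -> derivable g (f x) 1 ->
  derivable (g \o f) x 1.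
Proof.
move=> /derivable1_diffP df /derivable1_diffP dg.
exact/derivable1_diffP/differentiable_comp.
Qed.

Lemma derive1_comp_at f g x : derivable f x 1 -> derivable g (f x) 1 ->
  'D_1 (g \o f) x = 'D_1 g (f x) * 'D_1 f x.
Proof.
move=> /derivable1_diffP df /derivable1_diffP dg.
rewrite !deriveE //; last exact: differentiable_comp.
by rewrite diff_comp //= mulrC -linearZ /= [_ *: 1]mulr1.
Qed.

Lemma derive1_scale (l x : K^o) : 'D_1 (l \*: id) x = l.
Proof. by rewrite derive_val [_ *: 1]mulr1. Qed.

End ChainRule.

Lemma normc_gt0 (R : rcfType) (z : R[i]) : z != 0 -> 0 < Normc.normc z.
Proof.
move=> z0; rewrite lt_def; apply/andP; split.
  by apply: contra z0 => /eqP /Normc.eq0_normc ->.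
by case: z {z0} => a b; rewrite /= sqrtr_ge0.
Qed.

Lemma normr_normc (R : rcfType) (z : R[i]) : `|z| = (Normc.normc z)%:C.
Proof. by rewrite normc_def; case: z. Qed.

(* Also when [S] has no supremum: both sides are then the junk value 0. *)
Lemma sup_pscale (R : realType) (S : set R) (c : R) :
  0 < c -> sup [set c * x | x in S] = c * sup S.
Proof.
move=> c0.
have [hs|nhs] := pselect (has_sup S).
  have hsT : has_sup [set c * x | x in S].
    split; first by case: hs.1 => x Sx; exists (c * x); exists x.
    exists (c * sup S) => _ [x Sx <-]; rewrite ler_pM2l //.
    exact: sup_upper_bound hs _ Sx.
  apply/eqP; rewrite eq_le; apply/andP; split.
    apply: ge_sup; first exact: hsT.1.
    move=> _ [x Sx <-]; rewrite ler_pM2l //; exact: sup_upper_bound hs _ Sx.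
  rewrite -ler_pdivlMl //; apply: ge_sup; first exact: hs.1.
  move=> x Sx; rewrite ler_pdivlMl //; apply: sup_upper_bound hsT _ _.
  by exists x.
rewrite (sup_out nhs) mulr0 sup_out // => hsT; apply: nhs; split.
  by case: hsT.1 => _ [x Sx _]; exists x.
case: hsT.2 => M hM; exists (c^-1 * M) => x Sx.
rewrite ler_pdivlMl //; apply: hM; by exists x.
Qed.

Section HurwitzTransfer.
Variable R : realType.
Implicit Types (f g h : Cplx R -> Cplx R) (Y Om : set (Cplx R)).

Definition hurwitz_derivs Y v : set R :=
  [set x : R | 0 < x /\
     exists h, Hclass (@unit_disc R) Y 0 v h /\ 'D_1 h 0 = (x%:C : Cplx R)].

Definition cara_values Om Y s w : set (\bar R) :=
  [set ((hurwitz_eta Y (h w)) * Normc.normc ('D_1 h w))%:E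
     | h in [set h | Hclass Om Y w s h]].

Definition biholomorphic (Y1 Y2 : set (Cplx R)) f g : Prop :=
  holo_on f Y1 /\ holo_on g Y2 /\
  (forall z, Y1 z -> Y2 (f z) /\ g (f z) = z) /\
  (forall z, Y2 z -> Y1 (g z) /\ f (g z) = z).

Lemma biholomorphic_sym Y1 Y2 f g :
  biholomorphic Y1 Y2 f g -> biholomorphic Y2 Y1 g f.
Proof. by move=> [hf [hg [fK gK]]]. Qed.

Lemma unit_disc0 : @unit_disc R 0.
Proof. by rewrite /unit_disc /= normr0 ltr01. Qed.

Lemma Hclass_rotate Y s h (l : Cplx R) : `|l| = 1 ->
  Hclass (@unit_disc R) Y 0 s h ->
  Hclass (@unit_disc R) Y 0 s (h \o (l \*: id)).
Proof.
move=> l1 [[hh hY] [h0 hne]].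
have Dl z : unit_disc z -> @unit_disc R (l * z).
  by rewrite /unit_disc /= normrM l1 mul1r.
have l0 : l != 0 by rewrite -normr_eq0 l1 oner_neq0.
split; [split|split].
- move=> z Dz; apply: derivable1_comp; last exact: hh _ (Dl z Dz).
  exact/derivableZ/derivable_id.
- by move=> z Dz; exact: hY _ (Dl z Dz).
- by rewrite /= [_ *: 0]mulr0.
- move=> z Dz z0; apply: hne (Dl z Dz) _.
  by apply/eqP; rewrite mulf_neq0 //; apply/eqP.
Qed.

Section PostComposition.
Variables (Y1 Y2 : set (Cplx R)) (f g : Cplx R -> Cplx R).
Hypothesis hf : holo_on f Y1.
Hypothesis fK : forall z, Y1 z -> Y2 (f z) /\ g (f z) = z.

Lemma Hclass_comp Om w s h : Om w ->
  Hclass Om Y1 w s h -> Hclass Om Y2 w (f s) (f \o h).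
Proof.
move=> Ow [[hh hY] [hw hne]].
have Ys : Y1 s by rewrite -hw; apply: hY.
split; [split|split].
- by move=> z Oz; apply: derivable1_comp; [exact: hh | exact: hf _ (hY z Oz)].
- by move=> z Oz; exact: (fK (hY z Oz)).1.
- by rewrite /= hw.
- move=> z Oz zw /= fhz; apply: (hne z Oz zw).
  by rewrite -(fK (hY z Oz)).2 fhz (fK Ys).2.
Qed.

Lemma derive1_Hclass_comp Om w s h : Om w -> Hclass Om Y1 w s h ->
  'D_1 (f \o h) w = 'D_1 f s * 'D_1 h w.
Proof.
move=> Ow [[hh hY] [hw _]]; rewrite -hw.
by apply: derive1_comp_at; [exact: hh | exact: hf _ (hY w Ow)].
Qed.

Lemma derive1_left_inverse a : open Y1 -> holo_on g Y2 -> Y1 a ->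
  'D_1 g (f a) * 'D_1 f a = 1.
Proof.
move=> oY1 hg Ya.
rewrite -derive1_comp_at; [|exact: hf|exact: hg (fK Ya).1].
rewrite (@near_eq_derive _ _ _ _ id) ?derive_id //.
have : \forall z \near a, Y1 z by apply: open_nbhs_nbhs.
by apply: filterS => z Yz; rewrite /= (fK Yz).2.
Qed.

Lemma hurwitz_derivs_comp v x : 'D_1 f v != 0 ->
  hurwitz_derivs Y1 v x -> hurwitz_derivs Y2 (f v) (Normc.normc ('D_1 f v) * x).
Proof.
move=> c0 [x0 [k [kC kx]]].
set c := 'D_1 f v; set N := Normc.normc c.
have N0 : 0 < N := normc_gt0 c0.
set l : Cplx R := N%:C / c.
have l1 : `|l| = 1.
  by rewrite normrM normfV -normr_normc normr_id divff // normr_eq0.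
have fkC := Hclass_comp unit_disc0 kC.
split; first exact: mulr_gt0.
exists ((f \o k) \o (l \*: id)); split; first exact: Hclass_rotate.
rewrite derive1_comp_at; last 2 first.
- exact/derivableZ/derivable_id.
- by rewrite /= [_ *: 0]mulr0; exact: fkC.1.1 _ unit_disc0.
rewrite /= [_ *: 0]mulr0 derive1_scale (derive1_Hclass_comp unit_disc0 kC) kx.
by rewrite /l rmorphM /= -/c mulrC mulrA divfK.
Qed.

Lemma cara_values_comp Om w s : Om w ->
  hurwitz_eta Y2 (f s) * Normc.normc ('D_1 f s) = hurwitz_eta Y1 s ->
  cara_values Om Y1 s w `<=` cara_values Om Y2 (f s) w.
Proof.
move=> Ow eta_s _ [h hC <-]; exists (f \o h); first exact: Hclass_comp.
have [_ [hw _]] := hC.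
by rewrite /= (derive1_Hclass_comp Ow hC) hw Normc.normcM mulrA eta_s.
Qed.

End PostComposition.

Section Biholomorphism.
Variables (Y1 Y2 : set (Cplx R)) (f g : Cplx R -> Cplx R).
Hypotheses (oY1 : open Y1) (fgB : biholomorphic Y1 Y2 f g).

Lemma hurwitz_derivs_biholo v : Y1 v ->
  hurwitz_derivs Y2 (f v) =
  [set Normc.normc ('D_1 f v) * x | x in hurwitz_derivs Y1 v].
Proof.
have [hf [hg [fK gK]]] := fgB.
move=> Yv; have gfv := (fK v Yv).2.
have inv := derive1_left_inverse hf fK oY1 hg Yv.
have /andP[dg0 df0] : ('D_1 g (f v) != 0) && ('D_1 f v != 0).
  by rewrite -negb_or -mulf_eq0 inv oner_neq0.
apply/seteqP; split=> [y Sy|_ [x Sx <-]].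
  exists (Normc.normc ('D_1 g (f v)) * y).
    by have := hurwitz_derivs_comp hg gK dg0 Sy; rewrite gfv.
  by rewrite mulrA -Normc.normcM [_ * 'D_1 g _]mulrC inv Normc.normc1 mul1r.
exact: (hurwitz_derivs_comp hf fK df0 Sx).
Qed.

Lemma hurwitz_eta_biholo v : Y1 v ->
  hurwitz_eta Y2 (f v) * Normc.normc ('D_1 f v) = hurwitz_eta Y1 v.
Proof.
have [hf [hg [fK _]]] := fgB.
move=> Yv; have inv := derive1_left_inverse hf fK oY1 hg Yv.
have df0 : 'D_1 f v != 0.
  by apply: contra_eq_neq inv => ->; rewrite mulr0 eq_sym oner_neq0.
have N0 := normc_gt0 df0.
rewrite /hurwitz_eta /hurwitz_r -/(hurwitz_derivs _ _) -/(hurwitz_derivs _ _).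
rewrite hurwitz_derivs_biholo // sup_pscale // invfM [_^-1 * _]mulrC mulrA.
by rewrite divfK // gt_eqF.
Qed.

End Biholomorphism.

Lemma cara_density_biholo Y1 Y2 f g Om a w :
  open Y1 -> open Y2 -> biholomorphic Y1 Y2 f g -> Y1 a -> Om w ->
  cara_density Om Y1 a w = cara_density Om Y2 (f a) w.
Proof.
move=> oY1 oY2 fgB Ya Ow; have [hf [hg [fK gK]]] := fgB.
have [Yfa gfa] := fK a Ya.
have Hclass_ex :
    (exists h, Hclass Om Y1 w a h) = (exists h, Hclass Om Y2 w (f a) h).
  apply: propext; split=> -[h hC].
    by exists (f \o h); exact: (Hclass_comp hf fK Ow hC).
  by exists (g \o h); rewrite -gfa; exact: (Hclass_comp hg gK Ow hC).
rewrite /cara_density Hclass_ex; case: ifP => // _; congr ereal_sup.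
apply/seteqP; split.
  exact: (cara_values_comp hf fK Ow (hurwitz_eta_biholo oY1 fgB Ya)).
have gfB := biholomorphic_sym fgB.
have := cara_values_comp hg gK Ow (hurwitz_eta_biholo oY2 gfB Yfa).
by rewrite gfa.
Qed.

End HurwitzTransfer.

Theorem corollary3p15 (R : realType) (Y1 Y2 Om : set (Cplx R)) :
  domain Y1 -> domain Y2 -> Y1 != setT -> Y2 != setT ->
  conf_equiv Y1 Y2 -> domain Om ->
  exists (a b : Cplx R), Y1 a /\ Y2 b /\
    (forall w, Om w -> cara_density Om Y1 a w = cara_density Om Y2 b w).
Proof.
move=> [oY1 [_ [a Ya]]] [oY2 _] _ _ [f [g fgB]] _.
have [_ [_ [fK _]]] := fgB.
exists a, (f a); split=> //; split; first exact: (fK a Ya).1.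
by move=> w Ow; exact: cara_density_biholo fgB Ya Ow.
Qed.
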